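(* Let $m \in \mathbb{F}_2[t]$ be odd with $\deg m = d$, and let $N \ge 1$. The map $\Phi_m : \mathbb{F}_2[t]/(t^N) \to \{0,1\}^N$ sending the class of $f$ to the first $N$ terms $(p_0,\dots,p_{N-1})$ of the parity sequence of $f$ is well defined and is a bijection. Moreover, for each $(p_0,\dots,p_{N-1}) \in \{0,1\}^N$, with $s(N) = \sum_{i=0}^{N-1} p_i$, there exist $g_{N-1}, h_{N-1} \in \mathbb{F}_2[t]$ with $\deg g_{N-1} < N$ and $\deg h_{N-1} < d\, s(N)$ such that the polynomials whose parity sequence begins with $(p_0,\dots,p_{N-1})$ are exactly those of the form $f = g_{N-1} + t^N q$ with $q \in \mathbb{F}_2[t]$, and for every such $f$ one has $T^N(f) = h_{N-1} + m^{s(N)} q$. In particular, the first $N$ parity terms of a uniformly random polynomial of degree $< N$ are uniformly distributed on $\{0,1\}^N$.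
   Context: A polynomial $m \in \mathbb{F}_2[t]$ is called odd if $m(0) = 1$. For a fixed odd $m$, the $mx+1$ map $T:\mathbb{F}_2[t]\to\mathbb{F}_2[t]$ is $T(f) = f/t$ if $f \equiv 0 \pmod t$ and $T(f) = (mf+1)/t$ if $f \not\equiv 0 \pmod t$. Degrees are in $t$, with $\deg 0 = -\infty$. The parity sequence of $f$ is $(p_0, p_1, p_2, \dots)$ where $p_k = T^k(f)(0) \in \{0,1\}$ is the constant term of $T^k(f)$. *)

From HB Require Import structures.
From mathcomp Require Import all_boot all_order all_algebra.
Set Implicit Arguments. Unset Strict Implicit. Unset Printing Implicit Defensive.
Import GRing.Theory.
Local Open Scope ring_scope.

(* F_2[t] is {poly 'F_2}; the variable t is 'X. *)
Notation F2 := 'F_2.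

Definition is_odd_poly (m : {poly F2}) : Prop := m.[0] = 1.

Definition Tmap (m f : {poly F2}) : {poly F2} :=
  if f.[0] == 0 then f %/ 'X else (m * f + 1) %/ 'X.

Definition parity (m f : {poly F2}) (k : nat) : bool :=
  (iter k (Tmap m) f).[0] == 1.

Definition parity_prefix (m : {poly F2}) (N : nat) (f : {poly F2}) : N.-tuple bool :=
  [tuple parity m f i | i < N].

Definition Phi (m : {poly F2}) (N : nat) (x : {poly %/ ('X^N : {poly F2})}) : N.-tuple bool :=
  parity_prefix m N (x : {poly F2}).

Arguments parity_prefix m N f : clear implicits.
Arguments Phi m N x : clear implicits.

From HB Require Import structures.
From mathcomp Require Import all_boot all_order all_algebra.
From mathcomp Require Import zify ring.

(* Division by t makes T affine in the high-order part of its argument: if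
   f = g + t^N q then T^i(f) = T^i(g) + t^(N-i) m^(s_i) q for i <= N, where s_i
   counts the odd steps among the first i steps from g.  Hence the first N
   parities of f only depend on f mod t^N, and T^N(f) = T^N(g) + m^(s_N) q.
   When m is odd, adding t^N to g flips the N-th parity, so every prefix in
   {0,1}^N is realised by a polynomial of degree < N; as there are 2^N of
   each, the prefix map is a bijection. *)

Set Implicit Arguments.
Unset Strict Implicit.
Unset Printing Implicit Defensive.

Import GRing.Theory.
Local Open Scope ring_scope.

Lemma F2_eq0 (x : F2) : (x == 0) = (x != 1).
Proof. by case: x => [[|[|]]]. Qed.

Section ParitySequence.

Variable m : {poly F2}.

Lemma Tmap_addX (u v : {poly F2}) :
  Tmap m (u + 'X * v) = Tmap m u + m ^+ (u.[0] == 1) * v.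
Proof.
have divXD (w w' : {poly F2}) : (w + 'X * w') %/ 'X = w %/ 'X + w'.
  by rewrite divpD mulKp ?polyX_eq0.
rewrite /Tmap !hornerE F2_eq0; case: (u.[0] == 1) => /=.
  have -> : m * (u + 'X * v) + 1 = m * u + 1 + 'X * (m * v) by ring.
  by rewrite divXD expr1.
by rewrite expr0 mul1r divXD.
Qed.

Definition parity_count (f : {poly F2}) (n : nat) : nat :=
  (\sum_(i < n) parity m f i)%N.

Lemma iter_Tmap_addXn (g q : {poly F2}) (N i : nat) : (i <= N)%N ->
  iter i (Tmap m) (g + 'X^N * q) =
  iter i (Tmap m) g + 'X^(N - i) * (m ^+ parity_count g i * q).
Proof.
elim: i => [_|i IHi lt_iN]; first by rewrite subn0 /parity_count big_ord0 mul1r.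
rewrite /= IHi 1?ltnW // -(subnSK lt_iN) exprS -mulrA Tmap_addX.
by rewrite /parity_count big_ord_recr /= /parity addnC exprD mulrCA !mulrA.
Qed.

Lemma parity_addXn (g q : {poly F2}) (N i : nat) : (i < N)%N ->
  parity m (g + 'X^N * q) i = parity m g i.
Proof.
move=> lt_iN; rewrite /parity iter_Tmap_addXn 1?ltnW //.
by rewrite -(subnSK lt_iN) exprS -mulrA !hornerE.
Qed.

Lemma parity_count_prefix (f : {poly F2}) (N : nat) :
  parity_count f N = (\sum_(i < N) tnth (parity_prefix m N f) i)%N.
Proof. by apply: eq_bigr => i _; rewrite tnth_mktuple. Qed.

Lemma iterN_Tmap_addXn (g q : {poly F2}) (N : nat) :
  iter N (Tmap m) (g + 'X^N * q) = iter N (Tmap m) g + m ^+ parity_count g N * q.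
Proof. by rewrite iter_Tmap_addXn // subnn expr0 mul1r. Qed.

Lemma parity_prefix_addXn (g q : {poly F2}) (N : nat) :
  parity_prefix m N (g + 'X^N * q) = parity_prefix m N g.
Proof. by apply: eq_from_tnth => i; rewrite !tnth_mktuple parity_addXn. Qed.

Lemma parity_prefix_take (N : nat) (f : {poly F2}) :
  parity_prefix m N (take_poly N f) = parity_prefix m N f.
Proof. by rewrite -{2}(poly_take_drop N f) mulrC parity_prefix_addXn. Qed.

Section Degree.

Variable d : nat.
Hypothesis size_m : size m = d.+1.

Lemma size_Tmap (f : {poly F2}) :
  (size (Tmap m f) <= (size f).-1 + d * (f.[0] == 1%R))%N.
Proof.
rewrite /Tmap F2_eq0; case: (f.[0] == 1) => /=;
  rewrite size_divp ?polyX_eq0 // size_polyX /= ?muln0 ?addn0 ?subn1 //.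
have := size_polyD (m * f) 1; have := size_polyMleq m f.
rewrite size_poly1 size_m muln1.
move: (size f) (size (m * f)) (size (m * f + 1)) => a b c; lia.
Qed.

Lemma size_iter_Tmap (f : {poly F2}) (n : nat) :
  (size (iter n (Tmap m) f) <= (size f - n) + d * parity_count f n)%N.
Proof.
elim: n => [|n IHn]; first by rewrite subn0 /parity_count big_ord0 muln0 addn0.
rewrite /= (leq_trans (size_Tmap _)) // /parity_count big_ord_recr /=.
move: IHn; rewrite /parity_count /parity.
move: (size _) (size f) (\sum_(i < n) _)%N ((_).[0] == 1) => a b c e; lia.
Qed.

End Degree.

Hypothesis m_odd : m.[0] = 1.

Lemma parity_addXn_bit (g : {poly F2}) (N : nat) (b : bool) :
  parity m (g + 'X^N * b%:R) N = parity m g N (+) b.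
Proof.
rewrite /parity iterN_Tmap_addXn !hornerE m_odd expr1n mul1r.
by rewrite hornerMn hornerC; case: (_.[0]) => [[|[|]]]; case: b.
Qed.

Lemma exists_small_parity_fun (p : nat -> bool) (N : nat) :
  exists2 g : {poly F2}, (size g <= N)%N &
    forall i, (i < N)%N -> parity m g i = p i.
Proof.
elim: N => [|N [g size_g par_g]]; first by exists 0; rewrite ?size_poly0.
pose b := parity m g N != p N.
exists (g + 'X^N * b%:R).
  rewrite (leq_trans (size_polyD _ _)) // geq_max (leq_trans size_g) //.
  by rewrite /=; case: b; rewrite ?mulr1 ?mulr0 ?size_polyXn ?size_poly0.
move=> i; rewrite ltnS leq_eqVlt => /predU1P [-> | lt_iN].
  by rewrite parity_addXn_bit /b; case: (parity m g N); case: (p N).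
by rewrite parity_addXn ?par_g.
Qed.

Lemma exists_small_parity_prefix (N : nat) (p : N.-tuple bool) :
  exists2 g : {poly F2}, (size g <= N)%N & parity_prefix m N g = p.
Proof.
have [g size_g par_g] := exists_small_parity_fun (nth false p) N.
exists g => //; apply: eq_from_tnth => i.
by rewrite tnth_mktuple par_g // (tnth_nth false).
Qed.

Lemma parity_prefix_npoly_bij (N : nat) :
  bijective (fun x : {poly_N F2} => parity_prefix m N x).
Proof.
have ex_pre (p : N.-tuple bool) : exists x : {poly_N F2}, parity_prefix m N x == p.
  have [g size_g <-] := exists_small_parity_prefix p.
  have g_small : g \is a poly_of_size N by rewrite qualifE.
  by exists (NPoly g_small).
pose inv p := xchoose (ex_pre p).
have invK : cancel inv (fun x : {poly_N F2} => parity_prefix m N x).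
  by move=> p; apply/eqP/(xchooseP (ex_pre p)).
have inv_bij : bijective inv.
  apply: inj_card_bij (can_inj invK) _.
  by rewrite card_npoly card_tuple card_bool card_Fp.
exact: (bij_can_bij inv_bij invK).
Qed.

Lemma parity_prefix_inj_small (N : nat) (x y : {poly F2}) :
  (size x <= N)%N -> (size y <= N)%N ->
  parity_prefix m N x = parity_prefix m N y -> x = y.
Proof.
move=> size_x size_y eq_xy.
have x_small : x \is a poly_of_size N by rewrite qualifE.
have y_small : y \is a poly_of_size N by rewrite qualifE.
have := @bij_inj _ _ _ (parity_prefix_npoly_bij N) (NPoly x_small) (NPoly y_small).
by move=> /(_ eq_xy)/(congr1 val).
Qed.

Lemma parity_prefix_eqP (N : nat) (f g : {poly F2}) : (size g <= N)%N ->
  parity_prefix m N f = parity_prefix m N g <-> exists q, f = g + 'X^N * q.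
Proof.
move=> size_g; split=> [pre_f | [q ->]]; last exact: parity_prefix_addXn.
exists (drop_poly N f); rewrite -{1}(poly_take_drop N f) mulrC; congr (_ + _).
apply: (parity_prefix_inj_small (size_take_poly N f) size_g).
by rewrite parity_prefix_take.
Qed.

Lemma card_parity_prefix_fiber (N : nat) (p : N.-tuple bool) :
  #|[pred x : {poly_N F2} | parity_prefix m N x == p]| = 1%N.
Proof.
have [inv preK invK] := parity_prefix_npoly_bij N.
apply: (@eq_card1 _ (inv p)) => x; rewrite !inE.
by apply/eqP/eqP => [<- | ->]; rewrite ?preK ?invK.
Qed.

End ParitySequence.

Theorem mainTheorem2 (m : {poly F2}) (d N : nat) :
  is_odd_poly m -> size m = d.+1 -> (1 <= N)%N ->
  (forall f : {poly F2}, Phi m N (@in_qpoly _ ('X^N) f) = parity_prefix m N f) /\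
  bijective (Phi m N) /\
  (forall p : N.-tuple bool,
     let s := (\sum_(i < N) (tnth p i : nat))%N in
     exists g h : {poly F2},
       (size g <= N)%N /\ (size h <= d * s)%N /\
       (forall f : {poly F2},
          parity_prefix m N f = p <-> exists q : {poly F2}, f = g + 'X^N * q) /\
       (forall q : {poly F2},
          iter N (Tmap m) (g + 'X^N * q) = h + m ^+ s * q)) /\
  (forall p p' : N.-tuple bool,
     #|[pred x : {poly_N F2} | parity_prefix m N (x : {poly F2}) == p]| =
     #|[pred x : {poly_N F2} | parity_prefix m N (x : {poly F2}) == p']|).
Proof.
rewrite /is_odd_poly => m_odd size_m N_gt0.
have mk_monicXn : mk_monic ('X^N : {poly F2}) = 'X^N.
  by rewrite /mk_monic size_polyXn monicXn ltnS N_gt0.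
have qpoly_small (x : {poly %/ ('X^N : {poly F2})}) : (size (x : {poly F2}) <= N)%N.
  by have := size_mk_monic x; move: (size _) => sx; rewrite mk_monicXn size_polyXn.
split=> [f | ].
  by rewrite /Phi /= mk_monicXn -Pdiv.RingMonic.take_poly_rmodp parity_prefix_take.
split.
  apply: inj_card_bij => [x y eq_xy | ]; last first.
    by rewrite card_tuple card_qpoly mk_monicXn size_polyXn card_Fp // card_bool.
  exact/val_inj/(parity_prefix_inj_small m_odd (qpoly_small x) (qpoly_small y)).
split=> [p | p p']; last by rewrite !card_parity_prefix_fiber.
have [g size_g pre_g] := exists_small_parity_prefix m_odd p.
have count_g : parity_count m g N = (\sum_(i < N) tnth p i)%N.
  by rewrite parity_count_prefix pre_g.
exists g, (iter N (Tmap m) g); split=> //; split.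
  have := size_iter_Tmap size_m g N.
  by rewrite count_g (eqP (_ : size g - N == 0)%N) ?subn_eq0.
split=> [f | q]; first by rewrite -pre_g; exact: parity_prefix_eqP.
by rewrite iterN_Tmap_addXn count_g.
Qed.
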